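(* Let $T=\mathbf R[[x,y,z,w]]/(x^2+y^2)$ and let $R$ be an N-subring of $T$. Let $\omega,h\in T$ be such that the image of $\omega+zh$ in $T/(x,y)T$ is transcendental over the image of $R$ in $T/(x,y)T$. Then there is a subset $\Psi\subseteq\mathbf R$ with $|\Psi|\le|R|$ such that for every $u\in\mathbf R\setminus\Psi$, the image of $\omega+zh$ in $T/(x,y,z+uw)T$ is transcendental over $R/((x,y,z+uw)T\cap R)$.
   Context: $T=\mathbf R[[x,y,z,w]]/(x^2+y^2)$ with maximal ideal $\mathfrak m$; $x,y,z,w$ also denote their images in $T$. An N-subring of $T$ is a quasi-local unique factorization domain $(R,\mathfrak m\cap R)$ contained in $T$ with $|R|<|\mathbf R|$ such that whenever $t\in T$ is nonzero and $P\in\operatorname{Ass}(T/tT)$, $\operatorname{ht}(P\cap R)\le1$. *)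

From Stdlib Require Import Reals List Permutation ClassicalEpsilon.
Import ListNotations.
Open Scope R_scope.

(* A series is its coefficient function: f a b c d = coeff of x^a y^b z^c w^d. *)
Definition S := nat -> nat -> nat -> nat -> R.

Definition sadd (f g : S) : S := fun a b c d => f a b c d + g a b c d.
Definition sopp (f : S) : S := fun a b c d => - f a b c d.
(* Cauchy product; sum_f_R0 F n = F 0 + ... + F n *)
Definition smul (f g : S) : S := fun a b c d =>
  sum_f_R0 (fun i => sum_f_R0 (fun j => sum_f_R0 (fun k => sum_f_R0 (fun l =>
    f i j k l * g (a - i)%nat (b - j)%nat (c - k)%nat (d - l)%nat) d) c) b) a.
Definition smono (a0 b0 c0 d0 : nat) : S := fun a b c d =>
  if (Nat.eqb a a0 && Nat.eqb b b0 && Nat.eqb c c0 && Nat.eqb d d0)%bool then 1 else 0.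
Definition sconst (r : R) : S := fun a b c d =>
  if (Nat.eqb a 0 && Nat.eqb b 0 && Nat.eqb c 0 && Nat.eqb d 0)%bool then r else 0.

Definition sqq : S := sadd (smono 2 0 0 0) (smono 0 2 0 0).

Definition eqv (p q : S) : Prop :=
  exists s : S, forall a b c d, p a b c d - q a b c d = smul sqq s a b c d.

Definition T : Type := { C : S -> Prop | exists p : S, C = eqv p }.

Definition toT (p : S) : T := exist _ (eqv p) (ex_intro _ p eq_refl).
Definition rep (t : T) : S :=
  proj1_sig (constructive_indefinite_description _ (proj2_sig t)).

Definition Tzero : T := toT (sconst 0).
Definition Tone : T := toT (sconst 1).
Definition Tconst (r : R) : T := toT (sconst r).
Definition Tadd (s t : T) : T := toT (sadd (rep s) (rep t)).
Definition Topp (t : T) : T := toT (sopp (rep t)).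
Definition Tmul (s t : T) : T := toT (smul (rep s) (rep t)).

Definition Tx : T := toT (smono 1 0 0 0).
Definition Ty : T := toT (smono 0 1 0 0).
Definition Tz : T := toT (smono 0 0 1 0).
Definition Tw : T := toT (smono 0 0 0 1).

Fixpoint in_ideal (gs : list T) (t : T) : Prop :=
  match gs with
  | [] => t = Tzero
  | g :: gs' => exists c t', t = Tadd (Tmul c g) t' /\ in_ideal gs' t'
  end.

Definition in_m (t : T) : Prop := in_ideal [Tx; Ty; Tz; Tw] t.

Definition is_ideal_T (P : T -> Prop) : Prop :=
  P Tzero /\ (forall a b, P a -> P b -> P (Tadd a b)) /\
  (forall a b, P b -> P (Tmul a b)).

Definition is_prime_T (P : T -> Prop) : Prop :=
  is_ideal_T P /\ ~ P Tone /\ (forall a b, P (Tmul a b) -> P a \/ P b).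

(* P in Ass(T/tT): P prime and P = (tT :_T s) for some s in T *)
Definition is_ass_T (t : T) (P : T -> Prop) : Prop :=
  is_prime_T P /\ exists s : T, forall a, P a <-> in_ideal [t] (Tmul a s).

Definition is_subring (Rs : T -> Prop) : Prop :=
  Rs Tzero /\ Rs Tone /\ (forall a b, Rs a -> Rs b -> Rs (Tadd a b)) /\
  (forall a, Rs a -> Rs (Topp a)) /\ (forall a b, Rs a -> Rs b -> Rs (Tmul a b)).

Definition is_domain_sub (Rs : T -> Prop) : Prop :=
  Tone <> Tzero /\ forall a b, Rs a -> Rs b -> Tmul a b = Tzero -> a = Tzero \/ b = Tzero.

Definition unit_in (Rs : T -> Prop) (a : T) : Prop :=
  Rs a /\ exists b, Rs b /\ Tmul a b = Tone.

Definition irreducible_in (Rs : T -> Prop) (a : T) : Prop :=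
  Rs a /\ a <> Tzero /\ ~ unit_in Rs a /\
  forall b c, Rs b -> Rs c -> a = Tmul b c -> unit_in Rs b \/ unit_in Rs c.

Definition assoc_in (Rs : T -> Prop) (a b : T) : Prop :=
  exists u, unit_in Rs u /\ a = Tmul u b.

Definition prod_list (l : list T) : T := fold_right Tmul Tone l.

Definition is_UFD_sub (Rs : T -> Prop) : Prop :=
  is_domain_sub Rs /\
  (forall a, Rs a -> a <> Tzero -> ~ unit_in Rs a ->
     exists l, l <> [] /\ Forall (irreducible_in Rs) l /\ a = prod_list l) /\
  (forall l1 l2, Forall (irreducible_in Rs) l1 -> Forall (irreducible_in Rs) l2 ->
     prod_list l1 = prod_list l2 ->
     exists l2', Permutation l2 l2' /\ Forall2 (assoc_in Rs) l1 l2').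

Definition is_ideal_in (Rs : T -> Prop) (I : T -> Prop) : Prop :=
  (forall a, I a -> Rs a) /\ I Tzero /\
  (forall a b, I a -> I b -> I (Tadd a b)) /\
  (forall a b, Rs a -> I b -> I (Tmul a b)).

Definition is_maximal_in (Rs : T -> Prop) (I : T -> Prop) : Prop :=
  is_ideal_in Rs I /\ ~ I Tone /\
  forall J, is_ideal_in Rs J -> (forall a, I a -> J a) ->
    (forall a, J a <-> I a) \/ (forall a, J a <-> Rs a).

Definition is_prime_in (Rs : T -> Prop) (I : T -> Prop) : Prop :=
  is_ideal_in Rs I /\ ~ I Tone /\
  forall a b, Rs a -> Rs b -> I (Tmul a b) -> I a \/ I b.

Definition is_quasilocal_sub (Rs : T -> Prop) : Prop :=
  is_maximal_in Rs (fun a => Rs a /\ in_m a) /\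
  forall I, is_maximal_in Rs I -> forall a, I a <-> (Rs a /\ in_m a).

Definition strict_sub (A B : T -> Prop) : Prop :=
  (forall a, A a -> B a) /\ exists b, B b /\ ~ A b.

Definition height_le1_in (Rs : T -> Prop) (Q : T -> Prop) : Prop :=
  ~ exists Q0 Q1, is_prime_in Rs Q0 /\ is_prime_in Rs Q1 /\
      strict_sub Q0 Q1 /\ strict_sub Q1 Q.

Definition card_lt_R (Rs : T -> Prop) : Prop :=
  (exists f : {t : T | Rs t} -> R, forall a b, f a = f b -> a = b) /\
  ~ (exists g : R -> {t : T | Rs t}, forall a b, g a = g b -> a = b).

Definition N_subring (Rs : T -> Prop) : Prop :=
  is_subring Rs /\ is_quasilocal_sub Rs /\ is_UFD_sub Rs /\ card_lt_R Rs /\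
  forall t P, t <> Tzero -> is_ass_T t P -> height_le1_in Rs (fun a => P a /\ Rs a).

(* polynomial evaluation, coefficients listed from the constant term *)
Definition peval (rs : list T) (v : T) : T :=
  fold_right (fun r acc => Tadd r (Tmul v acc)) Tzero rs.

(* The image of v in T/J (J = ideal generated by gs) is transcendental over the image
   of Rs in T/J (equivalently over Rs/(J ∩ Rs)): every polynomial with coefficients
   in Rs whose value at v lies in J has all coefficients in J. *)
Definition transc_mod (gs : list T) (Rs : T -> Prop) (v : T) : Prop :=
  forall rs : list T, Forall Rs rs -> in_ideal gs (peval rs v) -> Forall (in_ideal gs) rs.

From Stdlib Require Import Reals List.
Import ListNotations.
Open Scope R_scope.
From Stdlib Require Import Lia Lra FunctionalExtensionality PropExtensionality ProofIrrelevance.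
From Stdlib Require Import ClassicalEpsilon Classical.
From Stdlib Require Cantor.
From mathcomp Require all_boot all_algebra classical_sets Rstruct.

(* Write v = omega + z h and J_u = (x, y, z + u w).  Let Psi be the set of those u for
   which some polynomial f with coefficients in Rs satisfies f(v) ∉ (x, y) but
   f(v) ∈ J_u.  For u ∉ Psi the transcendence modulo J_u follows from the hypothesis:
   f(v) ∈ J_u forces f(v) ∈ (x, y), so every coefficient of f lies in (x, y) ⊆ J_u.

   It remains to bound |Psi| by |Rs|.  For g ∈ T let g(0, 0, -u t, t) be the image of g
   under x, y ↦ 0, z ↦ -u t, w ↦ t; its t^n-coefficient [line_coef u g n] is a
   polynomial in u and vanishes when g ∈ J_u.  If g ∉ (x, y) one of these polynomials
   is nonzero, so only finitely many u satisfy g ∈ J_u.  Hence Psi is a union, indexed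
   by lists of elements of Rs, of finite sets; since Rs contains the integers it is
   infinite, and infinite cardinal arithmetic (|X × X| = |X|, proved with Zorn's lemma)
   gives an injection of Psi into Rs. *)

Module Roots.
Import all_boot all_algebra Rstruct GRing.Theory.
Local Open Scope ring_scope.

(* The roots of a nonzero real polynomial are contained in a finite list: peel off
   one linear factor per root. *)
Lemma poly_roots_list (p : {poly R}) : p != 0 -> exists L : list R, forall v, root p v -> In v L.
Proof.
move: {2}(size p) (leqnn (size p)) => n; elim: n p => [|n IH] p.
  by rewrite leqn0 size_poly_eq0 => /eqP -> /eqP.
move=> Hs Hp.
case: (Classical_Prop.classic (exists v, root p v)) => [[v /factor_theorem [q Hq]]|Hno].
  have Hq0 : q != 0 by apply: contra Hp; rewrite Hq => /eqP ->; rewrite mul0r.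
  have Hsq : (size q <= n)%N.
    by move: Hs; rewrite Hq size_Mmonic ?monicXsubC // ?size_XsubC // addn2.
  have [L HL] := IH q Hsq Hq0.
  exists (v :: L) => x; rewrite Hq rootM root_XsubC => /orP [/HL Hx|/eqP ->]; [by right|by left].
by exists nil => v Hv; apply: Hno; exists v.
Qed.

Lemma roots_finite (n : nat) (a : nat -> R) :
  (exists c, (c <= n)%coq_nat /\ a c <> R0) ->
  exists L : list R, forall v, sum_f_R0 (fun c => Rmult (a c) (pow v c)) n = R0 -> In v L.
Proof.
move=> [c [/leP Hc Hac]].
pose p : {poly R} := \poly_(i < n.+1) a i.
have Hp : p != 0.
  apply: contraPneq Hac => p0; have : p`_c = a c by rewrite coef_poly ltnS Hc.
  by rewrite p0 coef0 => <-.
have [L HL] := poly_roots_list _ Hp.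
exists L => v Hv; apply: HL; apply/eqP; rewrite horner_poly; etransitivity; last exact: Hv.
by rewrite sum_f_R0E big_mkord; apply: eq_bigr => i _; rewrite RmultE RpowE.
Qed.

End Roots.

Module Card.
Import all_boot classical_sets.
Set Implicit Arguments.
Unset Strict Implicit.
Local Open Scope nat_scope.
Local Open Scope classical_set_scope.

Section Comparability.
Variable X : Type.

Definition inj_into (A B : X -> Prop) : Prop :=
  exists f : X -> X, (forall x, A x -> B (f x)) /\
    (forall x y, A x -> A y -> f x = f y -> x = y).

Definition partial_inj (A B : X -> Prop) (H : X * X -> Prop) : Prop :=
  (forall a b, H (a, b) -> A a /\ B b) /\
  (forall a b b', H (a, b) -> H (a, b') -> b = b') /\
  (forall a a' b, H (a, b) -> H (a', b) -> a = a').

Lemma partial_inj_transpose A B H :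
  partial_inj A B H -> partial_inj B A (fun p => H (p.2, p.1)).
Proof.
move=> [HAB [Hfun Hinj]]; split; [|split].
- by move=> b a /HAB [].
- by move=> b a a' h h'; exact: Hinj h h'.
- by move=> b b' a h h'; exact: Hfun h h'.
Qed.

Lemma total_partial_inj A B H : partial_inj A B H ->
  (forall a, A a -> exists b, H (a, b)) -> inj_into A B.
Proof.
move=> [HAB [_ Hinj]] Htot.
pose f a := epsilon (inhabits a) (fun b => H (a, b)).
have Hf a : A a -> H (a, f a) by move=> Aa; exact: epsilon_spec (Htot a Aa).
exists f; split=> [a Aa|a a' Aa Aa' E]; first exact: (HAB _ _ (Hf a Aa)).2.
by apply: (Hinj a a' (f a) (Hf a Aa)); rewrite E; exact: Hf.
Qed.

Lemma partial_inj_chain A B (F : set (set (X * X))) :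
  F `<=` partial_inj A B -> total_on F subset -> partial_inj A B (\bigcup_(H in F) H).
Proof.
move=> FP Ftot.
have common H1 H2 p1 p2 : F H1 -> F H2 -> H1 p1 -> H2 p2 -> exists2 H, F H & H p1 /\ H p2.
  move=> F1 F2 h1 h2; case: (Ftot H1 H2 F1 F2) => sub.
  - by exists H2 => //; split=> //; exact: sub.
  - by exists H1 => //; split=> //; exact: sub.
split; [|split].
- by move=> a b [H FH h]; exact: (FP H FH).1 _ _ h.
- move=> a b b' [H1 F1 h1] [H2 F2 h2].
  have [H FH [g1 g2]] := common _ _ _ _ F1 F2 h1 h2.
  exact: (FP H FH).2.1 _ _ _ g1 g2.
- move=> a a' b [H1 F1 h1] [H2 F2 h2].
  have [H FH [g1 g2]] := common _ _ _ _ F1 F2 h1 h2.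
  exact: (FP H FH).2.2 _ _ _ g1 g2.
Qed.

(* Comparability of cardinals: a maximal partial injection is total on one side. *)
Lemma compare_card A B : inj_into A B \/ inj_into B A.
Proof.
have [H [HAB Hmax]] := Zorn_bigcup (@partial_inj_chain A B).
case: (classic (forall a, A a -> exists b, H (a, b))) => [Htot|NA].
  by left; exact: total_partial_inj HAB Htot.
case: (classic (forall b, B b -> exists a, H (a, b))) => [Htot|NB].
  by right; exact (total_partial_inj (partial_inj_transpose HAB) Htot).
have [a0 Ha0] := not_all_ex_not _ _ NA.
have [Aa0 Na0] := imply_to_and _ _ Ha0.
have [b0 Hb0] := not_all_ex_not _ _ NB.
have [Bb0 Nb0] := imply_to_and _ _ Hb0.
have [HAB' [Hfun Hinj]] := HAB.
exfalso; apply: (Hmax (fun p => H p \/ p = (a0, b0))).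
  split=> [p Hp|sub]; first by left.
  by apply: Na0; exists b0; apply: sub; right.
have fresh a b : H (a, b) -> a <> a0 /\ b <> b0.
  by move=> h; split=> E; [apply: Na0; exists b | apply: Nb0; exists a]; rewrite -E.
split; [|split].
- by move=> a b [/HAB'//|[-> ->]].
- move=> a b b' [h|E] [h'|E']; first exact: Hfun h h'.
  + by case: E' => /(fresh _ _ h).1.
  + by case: E => /(fresh _ _ h').1.
  + by case: E => _ ->; case: E' => _ ->.
- move=> a a' b [h|E] [h'|E']; first exact: Hinj h h'.
  + by case: E' => _ /(fresh _ _ h).2.
  + by case: E => _ /(fresh _ _ h').2.
  + by case: E => -> _; case: E' => -> _.
Qed.

End Comparability.

Section Square.
Variable X : Type.
Variable i : nat -> X.
Hypothesis i_inj : forall n m, i n = i m -> n = m.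

Definition dom (G : (X * X) * X -> Prop) (x : X) : Prop := exists y, G ((x, x), y).

(* [G] is the graph of an injection [dom G × dom G -> dom G]. *)
Definition good (G : (X * X) * X -> Prop) : Prop :=
  (forall p y y', G (p, y) -> G (p, y') -> y = y') /\
  (forall p p' y, G (p, y) -> G (p', y) -> p = p') /\
  (forall x1 x2, (exists y, G ((x1, x2), y)) <-> dom G x1 /\ dom G x2) /\
  (forall p y, G (p, y) -> dom G y).

Definition op (G : (X * X) * X -> Prop) (a b : X) : X :=
  epsilon (inhabits a) (fun y => G ((a, b), y)).

Section GoodGraph.
Variable G : (X * X) * X -> Prop.
Hypothesis G_good : good G.

Lemma graph_dom a b y : G ((a, b), y) -> dom G a /\ dom G b.
Proof. by move=> h; apply/(G_good.2.2.1 a b); exists y. Qed.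

Lemma op_graph a b : dom G a -> dom G b -> G ((a, b), op G a b).
Proof.
move=> Da Db; apply: (epsilon_spec (inhabits a) (fun y => G ((a, b), y))).
exact/(G_good.2.2.1 a b).
Qed.

Lemma op_dom a b : dom G a -> dom G b -> dom G (op G a b).
Proof. by move=> Da Db; exact: (G_good.2.2.2 (a, b) _ (op_graph Da Db)). Qed.

Lemma op_inj a b a' b' : dom G a -> dom G b -> dom G a' -> dom G b' ->
  op G a b = op G a' b' -> a = a' /\ b = b'.
Proof.
move=> Da Db Da' Db' E.
have h := op_graph Da Db; rewrite E in h.
by case: (G_good.2.1 _ _ _ h (op_graph Da' Db')).
Qed.
End GoodGraph.

Definition G0 : (X * X) * X -> Prop := fun q =>
  exists n m, q = ((i n, i m), i (Cantor.to_nat (n, m))).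

Lemma dom_G0 x : dom G0 x <-> exists n, x = i n.
Proof.
split=> [[y [n [m [-> _ _]]]]|[n ->]]; first by exists n.
by exists (i (Cantor.to_nat (n, n))), n, n.
Qed.

Lemma good_G0 : good G0.
Proof.
split; [|split; [|split]].
- move=> p y y' [n [m [-> ->]]] [n' [m' [/i_inj <- /i_inj <- ->]]] //.
- move=> p p' y [n [m [-> ->]]] [n' [m' [-> /i_inj E]]].
  by case: (Cantor.to_nat_inj (n, m) (n', m') E) => -> ->.
- move=> x1 x2; split=> [[y [n [m [-> -> _]]]]|[/dom_G0 [n ->] /dom_G0 [m ->]]].
  + by split; apply/dom_G0; [exists n|exists m].
  + by exists (i (Cantor.to_nat (n, m))), n, m.
- by move=> p y [n [m [_ ->]]]; apply/dom_G0; eexists.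
Qed.

(* The Zorn family: good graphs extending [G0] (the empty graph is allowed so
   that the union of the empty chain belongs to the family). *)
Definition admissible (G : (X * X) * X -> Prop) : Prop :=
  good G /\ ((forall q, ~ G q) \/ G0 `<=` G).

Lemma admissible_chain (F : set (set ((X * X) * X))) :
  F `<=` admissible -> total_on F subset -> admissible (\bigcup_(G in F) G).
Proof.
move=> FP Ftot.
have common G1 G2 q1 q2 : F G1 -> F G2 -> G1 q1 -> G2 q2 -> exists2 G, F G & G q1 /\ G q2.
  move=> F1 F2 h1 h2; case: (Ftot G1 G2 F1 F2) => sub.
  - by exists G2 => //; split=> //; exact: sub.
  - by exists G1 => //; split=> //; exact: sub.
have dom_union G x : F G -> dom G x -> dom (\bigcup_(G in F) G) x.
  by move=> FG [y h]; exists y, G.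
split; [split; [|split; [|split]]|].
- move=> p y y' [G1 F1 h1] [G2 F2 h2].
  have [G FG [g1 g2]] := common _ _ _ _ F1 F2 h1 h2.
  exact: (FP G FG).1.1 _ _ _ g1 g2.
- move=> p p' y [G1 F1 h1] [G2 F2 h2].
  have [G FG [g1 g2]] := common _ _ _ _ F1 F2 h1 h2.
  exact: (FP G FG).1.2.1 _ _ _ g1 g2.
- move=> x1 x2; split=> [[y [G FG h]]|[[y1 [G1 F1 h1]] [y2 [G2 F2 h2]]]].
  + have [D1 D2] := graph_dom (FP G FG).1 h.
    by split; exact: dom_union FG _.
  + have [G FG [g1 g2]] := common _ _ _ _ F1 F2 h1 h2.
    have [y h] := proj2 ((FP G FG).1.2.2.1 x1 x2) (conj (ex_intro _ y1 g1) (ex_intro _ y2 g2)).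
    by exists y, G.
- by move=> p y [G FG h]; exact: dom_union FG ((FP G FG).1.2.2.2 _ _ h).
- case: (classic (exists2 G, F G & G0 `<=` G)) => [[G FG HG]|N].
  + by right=> q h; exists G => //; exact: HG.
  + left=> q [G FG h]; apply: N; exists G => //.
    by case: (FP G FG).2 => // E; case: (E q h).
Qed.

Section Extension.
(* Then [G] extends to a good graph on
   [dom G ∪ m (dom G)]: the new pairs are coded injectively into [dom G] and
   sent into [m (dom G)]. *)
Variable G : (X * X) * X -> Prop.
Hypothesis G_good : good G.
Hypothesis dom_i : forall n, dom G (i n).
Variable m : X -> X.
Hypothesis m_out : forall x, dom G x -> ~ dom G (m x).
Hypothesis m_inj : forall x y, dom G x -> dom G y -> m x = m y -> x = y.

Definition ext_dom (x : X) : Prop := dom G x \/ exists2 d, dom G d & x = m d.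

Definition retract (x : X) : X :=
  epsilon (inhabits x) (fun d => dom G d /\ (x = d \/ x = m d)).

Lemma retract_spec x : ext_dom x -> dom G (retract x) /\ (x = retract x \/ x = m (retract x)).
Proof.
move=> Ex; apply: (epsilon_spec (inhabits x) (fun d => dom G d /\ (x = d \/ x = m d))).
by case: Ex => [Dx|[d Dd ->]]; [exists x; split; [|left] | exists d; split; [|right]].
Qed.

Lemma retract_dom x : dom G x -> retract x = x.
Proof.
move=> Dx; case: (retract_spec (or_introl Dx)) => Dr [//|E].
by case: (m_out Dr); rewrite -E.
Qed.

Lemma retract_out x : ext_dom x -> ~ dom G x -> x = m (retract x).
Proof. by move=> Ex Nx; case: (retract_spec Ex) => Dr [E|//]; case: Nx; rewrite E. Qed.

Definition code (x : X) : X :=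
  op G (i (if excluded_middle_informative (dom G x) then 0 else 1)) (retract x).

Lemma code_dom x : ext_dom x -> dom G (code x).
Proof. by move=> Ex; apply: op_dom => //; exact: (retract_spec Ex).1. Qed.

Lemma code_inj x x' : ext_dom x -> ext_dom x' -> code x = code x' -> x = x'.
Proof.
move=> Ex Ex' /(op_inj G_good (dom_i _) (retract_spec Ex).1 (dom_i _) (retract_spec Ex').1).
case: excluded_middle_informative => Dx; case: excluded_middle_informative => Dx' //;
  move=> [/i_inj // _ Er].
- by rewrite -(retract_dom Dx) Er retract_dom.
- by rewrite (retract_out Ex Dx) (retract_out Ex' Dx') Er.
Qed.

Definition new_pair (x1 x2 y : X) : Prop :=
  ext_dom x1 /\ ext_dom x2 /\ ~ (dom G x1 /\ dom G x2) /\ y = m (op G (code x1) (code x2)).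

Definition ext_graph (q : (X * X) * X) : Prop := G q \/ new_pair q.1.1 q.1.2 q.2.

Lemma new_pair_dom x1 x2 y : new_pair x1 x2 y -> dom G (op G (code x1) (code x2)).
Proof. by move=> [E1 [E2 _]]; apply: op_dom => //; exact: code_dom. Qed.

Lemma dom_ext x : dom ext_graph x <-> ext_dom x.
Proof.
split=> [[y [/(graph_dom G_good) [Dx _]|[Ex _]]]|Ex]; [by left|by []|].
case: (classic (dom G x)) => [[y h]|Nx]; first by exists y; left.
by exists (m (op G (code x) (code x))); right; split; [|split; [|split]] => // [[]].
Qed.

Lemma good_ext : good ext_graph.
Proof.
have [Gfun [Ginj [Gdom Gran]]] := G_good.
split; [|split; [|split]].
- move=> [a b] y y'; rewrite /ext_graph /= => [[h|[_ [_ [N ->]]]] [h'|[_ [_ [N' ->]]]]] //.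
  + exact: Gfun h h'.
  + by case: N'; exact: (graph_dom G_good h).
  + by case: N; exact: (graph_dom G_good h').
- move=> [a b] [a' b'] y; rewrite /ext_graph /= => [[h|h] [h'|h']]; first exact: Ginj h h'.
  + by case: (m_out (new_pair_dom h')); rewrite -h'.2.2.2; exact: Gran h.
  + by case: (m_out (new_pair_dom h)); rewrite -h.2.2.2; exact: Gran h'.
  + have [N N'] := (new_pair_dom h, new_pair_dom h').
    move: h h' => [E1 [E2 [_ ->]]] [E1' [E2' [_ /(m_inj N N')]]].
    move=> /(op_inj G_good (code_dom E1) (code_dom E2) (code_dom E1') (code_dom E2')).
    by move=> [/(code_inj E1 E1') -> /(code_inj E2 E2') ->].
- move=> x1 x2; rewrite !dom_ext; split=> [[y [h|h]]|[E1 E2]].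
  + by have [D1 D2] := (graph_dom G_good h); split; left.
  + by case: h => E1 [E2 _].
  + case: (classic (dom G x1 /\ dom G x2)) => [/Gdom [y h]|N]; first by exists y; left.
    by exists (m (op G (code x1) (code x2))); right.
- move=> [a b] y; rewrite /ext_graph /= => [[h|h]]; apply/dom_ext; first by left; exact: Gran h.
  by right; exists (op G (code a) (code b)); [exact: new_pair_dom h | exact: h.2.2.2].
Qed.

Lemma proper_ext : G `<` ext_graph.
Proof.
split=> [q h|sub]; first by left.
have [y h] := proj2 (dom_ext (m (i 0))) (or_intror (ex_intro2 _ _ _ (dom_i 0) erefl)).
by apply: (m_out (dom_i 0)); exists y; exact: sub.
Qed.
End Extension.

(* An infinite type [X] (one containing a copy of [nat]) injects its square into
   itself: a Zorn-maximal good graph has a domain at least as large as its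
   complement, since otherwise it could be extended. *)
Lemma square_inj : exists P : X -> X -> X,
  forall a b c d, P a b = P c d -> a = c /\ b = d.
Proof.
have [G [[G_good G_adm] G_max]] := Zorn_bigcup admissible_chain.
have G0_sub : G0 `<=` G.
  case: G_adm => // G_empty; exfalso.
  apply: (G_max G0); last by split; [exact: good_G0 | right].
  split=> [q /G_empty //|sub].
  by apply: (G_empty ((i 0, i 0), i (Cantor.to_nat (0, 0)))); apply: sub; exists 0, 0.
have dom_i n : dom G (i n) by exists (i (Cantor.to_nat (n, n))); apply: G0_sub; exists n, n.
case: (compare_card (dom G) (fun x => ~ dom G x)) => [[m [m_out m_inj]]|[k [k_in k_inj]]].
  exfalso; apply: (G_max (ext_graph G m)); first exact: proper_ext.
  by split; [exact: good_ext | right=> q /G0_sub h; left].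
pose h x := if excluded_middle_informative (dom G x) then op G (i 0) x else op G (i 1) (k x).
have h_dom x : dom G (h x).
  by rewrite /h; case: excluded_middle_informative => Dx; apply: op_dom => //; exact: k_in.
have h_inj x y : h x = h y -> x = y.
  rewrite /h; case: excluded_middle_informative => Dx; case: excluded_middle_informative => Dy E.
  - exact: (op_inj G_good (dom_i 0) Dx (dom_i 0) Dy E).2.
  - by case: (op_inj G_good (dom_i 0) Dx (dom_i 1) (k_in _ Dy) E) => /i_inj.
  - by case: (op_inj G_good (dom_i 1) (k_in _ Dx) (dom_i 0) Dy E) => /i_inj.
  - exact: k_inj Dx Dy (op_inj G_good (dom_i 1) (k_in _ Dx) (dom_i 1) (k_in _ Dy) E).2.
exists (fun a b => op G (h a) (h b)) => a b c d.
by move=> /(op_inj G_good (h_dom a) (h_dom b) (h_dom c) (h_dom d)) [/h_inj -> /h_inj ->].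
Qed.
End Square.

Lemma list_nat_inj (X : Type) (i : nat -> X) : (forall n m, i n = i m -> n = m) ->
  exists F : list X * nat -> X, forall a b, F a = F b -> a = b.
Proof.
move=> i_inj; have [P P_inj] := square_inj i_inj.
pose code := fix code (l : list X) : X := if l is x :: l' then P x (code l') else i 0.
have code_inj l l' : length l = length l' -> code l = code l' -> l = l'.
  elim: l l' => [|x l IH] [|x' l'] //= [] Hlen /P_inj [-> E].
  by rewrite (IH l' Hlen E).
exists (fun p => P (P (i (length p.1)) (code p.1)) (i p.2)) => [[l n] [l' n']] /=.
by move=> /P_inj [/P_inj [/i_inj Hlen /(code_inj _ _ Hlen) ->] /i_inj ->].
Qed.

(* If each list [l] over an infinite type [X] is attached to only finitely many
   points [y] (those with [Z l y]), then the set of all attached points injects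
   into [X]: send [y] to a list it is attached to, tagged by its position in the
   finite list of points attached to it. *)
Lemma attached_inj (X Y : Type) (i : nat -> X) (Z : list X -> Y -> Prop) :
  (forall n m, i n = i m -> n = m) ->
  (forall l, exists L : list Y, forall y, Z l y -> In y L) ->
  exists f : {y : Y | exists l, Z l y} -> X, forall a b, f a = f b -> a = b.
Proof.
move=> i_inj fin; have [F F_inj] := list_nat_inj i_inj.
pose list_of (w : {y : Y | exists l, Z l y}) :=
  proj1_sig (constructive_indefinite_description _ (proj2_sig w)).
have list_ofP w : Z (list_of w) (proj1_sig w).
  exact: proj2_sig (constructive_indefinite_description _ (proj2_sig w)).
pose points l := epsilon (inhabits nil) (fun L => forall y, Z l y -> In y L).
have pointsP l y : Z l y -> In y (points l).
  exact: epsilon_spec (inhabits nil) (fun L => forall y, Z l y -> In y L) (fin l) y.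
pose pos (y : Y) L := epsilon (inhabits 0) (fun n => nth_error L n = Some y).
have posP y L : In y L -> nth_error L (pos y L) = Some y.
  move=> Hy; apply: (epsilon_spec (inhabits 0) (fun n => nth_error L n = Some y)).
  exact: In_nth_error.
exists (fun w => F (list_of w, pos (proj1_sig w) (points (list_of w)))).
move=> [y1 p1] [y2 p2] /F_inj [E El].
have H1 := posP _ _ (pointsP _ _ (list_ofP (exist _ y1 p1))).
have H2 := posP _ _ (pointsP _ _ (list_ofP (exist _ y2 p2))).
rewrite /= in H1 H2 El; rewrite El E H2 in H1; case: H1 => E12; subst y2.
by rewrite (proof_irrelevance _ p1 p2).
Qed.
End Card.

Local Notation succ := Datatypes.S.

Ltac series_ext := apply functional_extensionality; intros ?a;
  apply functional_extensionality; intros ?b;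
  apply functional_extensionality; intros ?c; apply functional_extensionality; intros ?d.

Definition conv1 (F : nat -> nat -> R) (a : nat) : R := sum_f_R0 (fun i => F i (a - i)%nat) a.

Lemma smul_conv1 f g a b c d : smul f g a b c d =
  conv1 (fun i a' => conv1 (fun j b' => conv1 (fun k c' => conv1 (fun l d' =>
    f i j k l * g a' b' c' d') d) c) b) a.
Proof. reflexivity. Qed.

Lemma conv1_ext F G a : (forall i r, F i r = G i r) -> conv1 F a = conv1 G a.
Proof. intros H; apply sum_eq; intros; apply H. Qed.

Lemma conv1_zero a : conv1 (fun _ _ => 0) a = 0.
Proof. apply sum_eq_R0; reflexivity. Qed.

Lemma conv1_add F G a : conv1 (fun i r => F i r + G i r) a = conv1 F a + conv1 G a.
Proof. apply plus_sum. Qed.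

Lemma conv1_scal x F a : conv1 (fun i r => x * F i r) a = x * conv1 F a.
Proof. unfold conv1; rewrite scal_sum; apply sum_eq; intros; ring. Qed.

Lemma conv1_if (b : bool) F a :
  conv1 (fun i r => if b then F i r else 0) a = if b then conv1 F a else 0.
Proof. destruct b; [reflexivity | apply conv1_zero]. Qed.

Lemma sum_f_R0_succ_l f n : sum_f_R0 f (succ n) = f 0%nat + sum_f_R0 (fun i => f (succ i)) n.
Proof. apply (decomp_sum f (succ n)); lia. Qed.

Lemma conv1_shiftl m F a :
  conv1 (fun i r => if Nat.leb m i then F (i - m)%nat r else 0) a =
  if Nat.leb m a then conv1 F (a - m)%nat else 0.
Proof.
  revert a F; induction m as [|m IH]; intros a F.
  - simpl Nat.leb; cbv iota; rewrite Nat.sub_0_r.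
    apply conv1_ext; intros i r; rewrite Nat.sub_0_r; reflexivity.
  - destruct a as [|a]; [reflexivity|].
    unfold conv1 at 1; rewrite sum_f_R0_succ_l, Rplus_0_l; simpl Nat.leb; cbv beta iota.
    rewrite <- IH; apply sum_eq; reflexivity.
Qed.

Lemma conv1_shiftr m F a :
  conv1 (fun i r => if Nat.leb m r then F i (r - m)%nat else 0) a =
  if Nat.leb m a then conv1 F (a - m)%nat else 0.
Proof.
  revert a F; induction m as [|m IH]; intros a F.
  - simpl Nat.leb; cbv iota; rewrite Nat.sub_0_r.
    apply conv1_ext; intros i r; rewrite Nat.sub_0_r; reflexivity.
  - destruct a as [|a]; [reflexivity|].
    unfold conv1 at 1; rewrite tech5, Nat.sub_diag.
    change (Nat.leb (succ m) 0) with false; cbv beta iota; rewrite Rplus_0_r.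
    change (Nat.leb (succ m) (succ a)) with (Nat.leb m a); rewrite <- IH; apply sum_eq; intros i Hi.
    replace (succ a - i)%nat with (succ (a - i)) by lia; reflexivity.
Qed.

Lemma conv1_deltal F a : conv1 (fun i r => if Nat.eqb i 0 then F r else 0) a = F a.
Proof.
  destruct a as [|a]; [reflexivity|].
  unfold conv1; rewrite sum_f_R0_succ_l, Nat.sub_0_r, sum_eq_R0 by reflexivity; simpl; ring.
Qed.

Lemma conv1_deltar F a : conv1 (fun i r => if Nat.eqb r 0 then F i else 0) a = F a.
Proof.
  destruct a as [|a]; [reflexivity|].
  unfold conv1; rewrite tech5, Nat.sub_diag, sum_eq_R0; [simpl; ring|].
  intros i Hi; replace (succ a - i)%nat with (succ (a - i)) by lia; reflexivity.
Qed.

Definition conv4 (F : nat -> nat -> nat -> nat -> nat -> nat -> nat -> nat -> R) a b c d :=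
  conv1 (fun i a' => conv1 (fun j b' => conv1 (fun k c' => conv1 (fun l d' =>
    F i j k l a' b' c' d') d) c) b) a.

Lemma smul_conv4 f g a b c d :
  smul f g a b c d = conv4 (fun i j k l a' b' c' d' => f i j k l * g a' b' c' d') a b c d.
Proof. reflexivity. Qed.

Lemma conv4_ext F G a b c d :
  (forall i j k l a' b' c' d', F i j k l a' b' c' d' = G i j k l a' b' c' d') ->
  conv4 F a b c d = conv4 G a b c d.
Proof. intros H; do 4 (apply conv1_ext; intros); apply H. Qed.

Lemma conv4_add F G a b c d :
  conv4 (fun i j k l a' b' c' d' => F i j k l a' b' c' d' + G i j k l a' b' c' d') a b c d =
  conv4 F a b c d + conv4 G a b c d.
Proof.
  unfold conv4; do 3 (rewrite <- conv1_add; apply conv1_ext; intros); apply conv1_add.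
Qed.

Lemma conv4_scal x F a b c d :
  conv4 (fun i j k l a' b' c' d' => x * F i j k l a' b' c' d') a b c d = x * conv4 F a b c d.
Proof.
  unfold conv4; do 3 (rewrite <- conv1_scal; apply conv1_ext; intros); apply conv1_scal.
Qed.

Lemma conv4_zero a b c d : conv4 (fun _ _ _ _ _ _ _ _ => 0) a b c d = 0.
Proof.
  unfold conv4, conv1; repeat (apply sum_eq_R0; intros); reflexivity.
Qed.

(* Auxiliary series operations: zero, scaling, unit, and shifts (multiplication by
   a power of x, y, z or w). *)
Definition szero : S := fun _ _ _ _ => 0.
Definition scal (x : R) (f : S) : S := fun a b c d => x * f a b c d.
Definition e1 : S := sconst 1.
Definition shA (m : nat) (f : S) : S :=
  fun a b c d => if Nat.leb m a then f (a - m)%nat b c d else 0.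
Definition shB (m : nat) (f : S) : S :=
  fun a b c d => if Nat.leb m b then f a (b - m)%nat c d else 0.
Definition shC (m : nat) (f : S) : S :=
  fun a b c d => if Nat.leb m c then f a b (c - m)%nat d else 0.
Definition shD (m : nat) (f : S) : S :=
  fun a b c d => if Nat.leb m d then f a b c (d - m)%nat else 0.

Ltac smul_linear op conv4_lemma :=
  series_ext; unfold op at 2; rewrite !smul_conv4, <- conv4_lemma;
  apply conv4_ext; intros; unfold op; ring.

Lemma smul_addl f g h : smul (sadd f g) h = sadd (smul f h) (smul g h).
Proof. smul_linear sadd conv4_add. Qed.

Lemma smul_addr f g h : smul f (sadd g h) = sadd (smul f g) (smul f h).
Proof. smul_linear sadd conv4_add. Qed.

Lemma smul_scall x f g : smul (scal x f) g = scal x (smul f g).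
Proof. smul_linear scal conv4_scal. Qed.

Lemma smul_scalr x f g : smul f (scal x g) = scal x (smul f g).
Proof. smul_linear scal conv4_scal. Qed.

Lemma smul_zerol g : smul szero g = szero.
Proof.
  series_ext; rewrite smul_conv4; change (szero a b c d) with 0.
  rewrite <- (conv4_zero a b c d); apply conv4_ext; intros; unfold szero; ring.
Qed.

Lemma smul_zeror f : smul f szero = szero.
Proof.
  series_ext; rewrite smul_conv4; change (szero a b c d) with 0.
  rewrite <- (conv4_zero a b c d); apply conv4_ext; intros; unfold szero; ring.
Qed.

Lemma e1_val a b c d :
  e1 a b c d = if (Nat.eqb a 0 && Nat.eqb b 0 && Nat.eqb c 0 && Nat.eqb d 0)%bool then 1 else 0.
Proof. reflexivity. Qed.

Ltac conv_zero := try unfold conv1; repeat (apply sum_eq_R0; intros).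

Lemma conv1_onlyr F a : (forall i r, r <> 0%nat -> F i r = 0) -> conv1 F a = F a 0%nat.
Proof.
  intros H; rewrite <- (conv1_deltar (fun i => F i 0%nat)); apply conv1_ext; intros i r.
  destruct (Nat.eqb_spec r 0); [subst; reflexivity | apply H; assumption].
Qed.

Lemma conv1_onlyl F a : (forall i r, i <> 0%nat -> F i r = 0) -> conv1 F a = F 0%nat a.
Proof.
  intros H; rewrite <- (conv1_deltal (F 0%nat)); apply conv1_ext; intros i r.
  destruct (Nat.eqb_spec i 0); [subst; reflexivity | apply H; assumption].
Qed.

(* [e1] is a two-sided unit: at each level of the nested convolution only the index
   where the unit's exponent is [0] contributes. *)
Ltac unit_level only :=
  rewrite only; [cbv beta | intros ? ? Hr; conv_zero;
    rewrite e1_val, (proj2 (Nat.eqb_neq _ _) Hr); simpl; ring].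

Lemma smul_er f : smul f e1 = f.
Proof.
  series_ext; rewrite smul_conv1; do 4 unit_level conv1_onlyr; rewrite e1_val; simpl; ring.
Qed.

Lemma smul_el f : smul e1 f = f.
Proof.
  series_ext; rewrite smul_conv1; do 4 unit_level conv1_onlyl; rewrite e1_val; simpl; ring.
Qed.

Ltac smul_shift sh shift_conv :=
  series_ext; unfold sh at 2; rewrite !smul_conv1;
  repeat (rewrite <- conv1_if; apply conv1_ext; intros);
  rewrite <- shift_conv; apply conv1_ext; intros; unfold sh;
  match goal with |- context [Nat.leb ?m ?x] => destruct (Nat.leb m x) end;
  [reflexivity | conv_zero; ring].

Lemma smul_shAr m f g : smul f (shA m g) = shA m (smul f g).
Proof. smul_shift shA conv1_shiftr. Qed.

Lemma smul_shBr m f g : smul f (shB m g) = shB m (smul f g).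
Proof. smul_shift shB conv1_shiftr. Qed.

Lemma smul_shCr m f g : smul f (shC m g) = shC m (smul f g).
Proof. smul_shift shC conv1_shiftr. Qed.

Lemma smul_shDr m f g : smul f (shD m g) = shD m (smul f g).
Proof. smul_shift shD conv1_shiftr. Qed.

Lemma smul_shAl m f g : smul (shA m f) g = shA m (smul f g).
Proof. smul_shift shA conv1_shiftl. Qed.

Lemma smul_shBl m f g : smul (shB m f) g = shB m (smul f g).
Proof. smul_shift shB conv1_shiftl. Qed.

Lemma eqb_split a m : Nat.eqb a m = (Nat.leb m a && Nat.eqb (a - m) 0)%bool.
Proof.
  destruct (Nat.eqb_spec a m); destruct (Nat.leb_spec m a); destruct (Nat.eqb_spec (a - m) 0);
  simpl; try reflexivity; exfalso; lia.
Qed.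

Lemma smono_sh m1 m2 m3 m4 : smono m1 m2 m3 m4 = shA m1 (shB m2 (shC m3 (shD m4 e1))).
Proof.
  series_ext. unfold smono, shA, shB, shC, shD. rewrite e1_val.
  rewrite (eqb_split a m1), (eqb_split b m2), (eqb_split c m3), (eqb_split d m4).
  destruct (Nat.leb m1 a), (Nat.leb m2 b), (Nat.leb m3 c), (Nat.leb m4 d),
    (Nat.eqb (a - m1) 0), (Nat.eqb (b - m2) 0), (Nat.eqb (c - m3) 0), (Nat.eqb (d - m4) 0);
  reflexivity.
Qed.

Lemma shB0 f : shB 0 f = f.
Proof. series_ext. unfold shB. simpl. rewrite Nat.sub_0_r. reflexivity. Qed.

Lemma shC0 f : shC 0 f = f.
Proof. series_ext. unfold shC. simpl. rewrite Nat.sub_0_r. reflexivity. Qed.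

Lemma shD0 f : shD 0 f = f.
Proof. series_ext. unfold shD. simpl. rewrite Nat.sub_0_r. reflexivity. Qed.

Lemma shA0 f : shA 0 f = f.
Proof. series_ext. unfold shA. simpl. rewrite Nat.sub_0_r. reflexivity. Qed.

Lemma sqq_mul s : smul sqq s = sadd (shA 2 s) (shB 2 s).
Proof.
  unfold sqq. rewrite smul_addl. rewrite !smono_sh, !shA0, !shB0, !shC0, !shD0.
  rewrite smul_shAl, smul_shBl, !smul_el. reflexivity.
Qed.

Lemma smul_sqq_l s q : smul (smul sqq s) q = smul sqq (smul s q).
Proof.
  rewrite (sqq_mul s), (sqq_mul (smul s q)). rewrite smul_addl, smul_shAl, smul_shBl.
  reflexivity.
Qed.

Lemma smul_sqq_r p s : smul p (smul sqq s) = smul sqq (smul p s).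
Proof.
  rewrite (sqq_mul s), (sqq_mul (smul p s)). rewrite smul_addr, smul_shAr, smul_shBr.
  reflexivity.
Qed.

Lemma eqv_refl p : eqv p p.
Proof. exists szero. intros. rewrite smul_zeror. unfold szero. ring. Qed.

Lemma eqv_sym p q : eqv p q -> eqv q p.
Proof.
  intros [s H]. exists (scal (-1) s). intros. rewrite smul_scalr. unfold scal.
  rewrite <- H. ring.
Qed.

Lemma eqv_trans p q r : eqv p q -> eqv q r -> eqv p r.
Proof.
  intros [s1 H1] [s2 H2]. exists (sadd s1 s2). intros. rewrite smul_addr. unfold sadd.
  rewrite <- H1, <- H2. ring.
Qed.

Lemma eqv_fun p q : eqv p q -> eqv p = eqv q.
Proof.
  intros H. apply functional_extensionality. intros r. apply propositional_extensionality.
  split; intros H'.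
  - apply eqv_trans with p; [apply eqv_sym|]; assumption.
  - apply eqv_trans with q; assumption.
Qed.

Lemma T_eq (x y : T) : proj1_sig x = proj1_sig y -> x = y.
Proof.
  destruct x as [x px], y as [y py]. simpl. intros E. subst. f_equal. apply proof_irrelevance.
Qed.

Lemma toT_eq p q : eqv p q -> toT p = toT q.
Proof. intros H. apply T_eq. simpl. apply eqv_fun. exact H. Qed.

Lemma rep_spec t : proj1_sig t = eqv (rep t).
Proof.
  unfold rep; destruct (constructive_indefinite_description _ (proj2_sig t)) as [p Hp].
  exact Hp.
Qed.

Lemma toT_rep t : toT (rep t) = t.
Proof. apply T_eq. simpl. rewrite rep_spec. reflexivity. Qed.

Lemma rep_toT p : eqv (rep (toT p)) p.
Proof.
  pose proof (rep_spec (toT p)) as H. simpl in H.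
  apply eqv_sym. rewrite H. apply eqv_refl.
Qed.

Lemma toT_inj p q : toT p = toT q -> eqv p q.
Proof.
  intros H. apply (f_equal (@proj1_sig _ _)) in H. simpl in H. rewrite H. apply eqv_refl.
Qed.

Lemma eqv_add p p' q q' : eqv p p' -> eqv q q' -> eqv (sadd p q) (sadd p' q').
Proof.
  intros [s1 H1] [s2 H2]. exists (sadd s1 s2). intros. rewrite smul_addr. unfold sadd.
  rewrite <- H1, <- H2. ring.
Qed.

Lemma eqv_as_sum p p' : eqv p p' -> exists s, p = sadd p' (smul sqq s).
Proof.
  intros [s H]. exists s. series_ext. unfold sadd. rewrite <- H. ring.
Qed.

Lemma eqv_mul p p' q q' : eqv p p' -> eqv q q' -> eqv (smul p q) (smul p' q').
Proof.
  intros H1 H2. destruct (eqv_as_sum _ _ H1) as [s1 E1]. destruct (eqv_as_sum _ _ H2) as [s2 E2].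
  subst p q.
  exists (sadd (smul p' s2) (sadd (smul s1 q') (smul s1 (smul sqq s2)))).
  intros.
  rewrite (smul_addl p' (smul sqq s1) (sadd q' (smul sqq s2))).
  rewrite (smul_addr p' q' (smul sqq s2)).
  rewrite (smul_addr (smul sqq s1) q' (smul sqq s2)).
  rewrite (smul_sqq_r p' s2), (smul_sqq_l s1 q'), (smul_sqq_l s1 (smul sqq s2)).
  rewrite (smul_addr sqq (smul p' s2)).
  rewrite (smul_addr sqq (smul s1 q') (smul s1 (smul sqq s2))).
  unfold sadd. ring.
Qed.

Lemma Tadd_toT p q : Tadd (toT p) (toT q) = toT (sadd p q).
Proof. unfold Tadd. apply toT_eq. apply eqv_add; apply rep_toT. Qed.

Lemma Tmul_toT p q : Tmul (toT p) (toT q) = toT (smul p q).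
Proof. unfold Tmul. apply toT_eq. apply eqv_mul; apply rep_toT. Qed.

(* The pure [z, w] part [p 0 0 _ _] of a series only depends on its class in T,
   since multiples of x^2 + y^2 have no such part. *)
Lemma eqv_restr p q c d : eqv p q -> p 0%nat 0%nat c d = q 0%nat 0%nat c d.
Proof.
  intros [s H]. specialize (H 0%nat 0%nat c d). rewrite sqq_mul in H.
  unfold sadd, shA, shB in H. simpl in H. lra.
Qed.

Lemma sconst_scal u : sconst u = scal u e1.
Proof.
  series_ext. unfold scal. rewrite e1_val. unfold sconst.
  destruct (Nat.eqb a 0 && Nat.eqb b 0 && Nat.eqb c 0 && Nat.eqb d 0)%bool; ring.
Qed.

Lemma sconst0 : sconst 0 = szero.
Proof. rewrite sconst_scal. series_ext. unfold scal, szero. ring. Qed.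

Lemma mono_x : smono 1 0 0 0 = shA 1 e1.
Proof. rewrite smono_sh, shB0, shC0, shD0. reflexivity. Qed.

Lemma mono_y : smono 0 1 0 0 = shB 1 e1.
Proof. rewrite smono_sh, shA0, shC0, shD0. reflexivity. Qed.

Lemma mono_z : smono 0 0 1 0 = shC 1 e1.
Proof. rewrite smono_sh, shA0, shB0, shD0. reflexivity. Qed.

Lemma mono_w : smono 0 0 0 1 = shD 1 e1.
Proof. rewrite smono_sh, shA0, shB0, shC0. reflexivity. Qed.

(* [line_coef u p n] is the coefficient of [t^n] in [p(0, 0, -u t, t)].  This linear
   functional only sees [p] modulo [(x, y)], and it kills [(z + u w)]. *)
Definition line_coef (u : R) (p : S) (n : nat) : R :=
  sum_f_R0 (fun c => p 0%nat 0%nat c (n - c)%nat * (- u) ^ c) n.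

Lemma line_coef_eqv u p q n : eqv p q -> line_coef u p n = line_coef u q n.
Proof.
  intros H; apply sum_eq; intros c _; rewrite (eqv_restr p q c (n - c)%nat H); reflexivity.
Qed.

(* On a multiple of [z + u w] the sum telescopes: the [z]-term of index [c+1] cancels
   the [w]-term of index [c]. *)
Lemma line_coef_z_uw u r n : line_coef u (sadd (shC 1 r) (scal u (shD 1 r))) n = 0.
Proof.
  unfold line_coef, sadd, scal; destruct n as [|N].
  - unfold shC, shD; simpl; ring.
  - rewrite (sum_eq _ (fun c => shC 1 r 0%nat 0%nat c (succ N - c)%nat * (- u) ^ c +
        u * shD 1 r 0%nat 0%nat c (succ N - c)%nat * (- u) ^ c)) by (intros; ring).
    rewrite plus_sum, sum_f_R0_succ_l, tech5, Nat.sub_diag.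
    replace (shC 1 r 0%nat 0%nat 0%nat (succ N - 0)%nat) with 0 by reflexivity.
    replace (shD 1 r 0%nat 0%nat (succ N) 0%nat) with 0 by reflexivity.
    rewrite (sum_eq (fun i => shC 1 r 0%nat 0%nat (succ i) (succ N - succ i)%nat * (- u) ^ succ i)
      (fun i => (u * shD 1 r 0%nat 0%nat i (succ N - i)%nat * (- u) ^ i) * (-1))).
    + rewrite <- scal_sum; ring.
    + intros i Hi; unfold shC, shD.
      replace (succ N - i)%nat with (succ (N - i)) by lia; simpl; rewrite !Nat.sub_0_r; ring.
Qed.
Definition Jgens (u : R) : list T := [Tx; Ty; Tadd Tz (Tmul (Tconst u) Tw)].

(* [line_coef u] vanishes on [(x, y, z + u w)]: writing [t = c1 x + c2 y + c3 (z + u w)],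
   the first two terms have no pure [z, w] part and the last is handled by
   [line_coef_z_uw]. *)
Lemma line_coef_J u t n : in_ideal (Jgens u) t -> line_coef u (rep t) n = 0.
Proof.
  intros H; simpl in H.
  destruct H as [c1 [t1 [E1 [c2 [t2 [E2 [c3 [t3 [E3 E4]]]]]]]]]. subst.
  rewrite <- (toT_rep c1), <- (toT_rep c2), <- (toT_rep c3).
  unfold Tx, Ty, Tz, Tw, Tconst, Tzero.
  rewrite !Tmul_toT, !Tadd_toT, !Tmul_toT, !Tadd_toT.
  rewrite (line_coef_eqv _ _ _ _ (rep_toT _)).
  rewrite mono_x, mono_y, mono_z, mono_w, sconst0, (sconst_scal u).
  repeat first [rewrite smul_scall | rewrite smul_scalr | rewrite smul_addr
    | rewrite smul_shAr | rewrite smul_shBr | rewrite smul_shCr | rewrite smul_shDr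
    | rewrite smul_el | rewrite smul_er].
  rewrite <- (line_coef_z_uw u (rep c3) n); apply sum_eq; intros c _.
  unfold sadd, scal, szero, shA, shB. simpl Nat.leb. cbv iota. ring.
Qed.

Lemma xy_sub_J u t : in_ideal [Tx; Ty] t -> in_ideal (Jgens u) t.
Proof.
  simpl. intros [c1 [t1 [E1 [c2 [t2 [E2 E3]]]]]].
  exists c1, t1. split; [exact E1|]. exists c2, t2. split; [exact E2|].
  exists Tzero, Tzero. split; [|reflexivity]. subst t2.
  rewrite <- (toT_rep (Tadd Tz (Tmul (Tconst u) Tw))). unfold Tzero.
  rewrite Tmul_toT, Tadd_toT, sconst0, smul_zerol. f_equal. series_ext. unfold sadd, szero. ring.
Qed.

(* An element whose series has no pure [z, w] part lies in [(x, y)]: it is [A x + B y],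
   where [A] collects the terms divisible by [x] and [B] the remaining ones. *)
Lemma xy_of_zw_zero t : (forall c d, rep t 0%nat 0%nat c d = 0) -> in_ideal [Tx; Ty] t.
Proof.
  intros H. simpl.
  set (p := rep t) in *.
  set (A := fun a b c d => p (succ a) b c d).
  set (B := fun a b c d => if Nat.eqb a 0 then p 0%nat (succ b) c d else 0).
  exists (toT A), (Tadd (Tmul (toT B) Ty) Tzero). split.
  2:{ exists (toT B), Tzero. split; reflexivity. }
  rewrite <- (toT_rep t). fold p. unfold Tx, Ty, Tzero.
  rewrite !Tmul_toT, !Tadd_toT. rewrite mono_x, mono_y, sconst0, smul_shAr, smul_shBr, !smul_er.
  f_equal. series_ext. unfold sadd, shA, shB, szero, A, B.
  destruct a as [|a], b as [|b]; simpl; rewrite ?Nat.sub_0_r, ?H; ring.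
Qed.

Fixpoint nat_T (n : nat) : T := match n with O => Tzero | succ n => Tadd Tone (nat_T n) end.

Lemma nat_T_toT n : nat_T n = toT (sconst (INR n)).
Proof.
  induction n as [|n IH]; [reflexivity|].
  simpl nat_T; rewrite IH; unfold Tone; rewrite Tadd_toT; f_equal; series_ext; unfold sadd, sconst.
  rewrite S_INR; destruct (Nat.eqb a 0 && Nat.eqb b 0 && Nat.eqb c 0 && Nat.eqb d 0)%bool; ring.
Qed.

Lemma nat_in_subring Rs : is_subring Rs ->
  exists i : nat -> {t : T | Rs t}, forall n m, i n = i m -> n = m.
Proof.
  intros [H0 [H1 [Hadd _]]].
  assert (HRs : forall n, Rs (nat_T n)) by (induction n; simpl; auto).
  exists (fun n => exist _ (nat_T n) (HRs n)); intros n m E.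
  apply (f_equal (@proj1_sig _ _)) in E; simpl in E; rewrite !nat_T_toT in E.
  apply toT_inj, (eqv_restr _ _ 0%nat 0%nat) in E; apply INR_eq; exact E.
Qed.

(* An element outside (x, y) lies in (x, y, z + u w) for only finitely many u: some
   [line_coef u g n], a nonzero polynomial in u, must vanish. *)
Lemma finite_J_params (g : T) :
  exists L : list R, forall u, ~ in_ideal [Tx; Ty] g -> in_ideal (Jgens u) g -> In u L.
Proof.
  destruct (classic (in_ideal [Tx; Ty] g)) as [Hg|Hg]; [exists nil; tauto|].
  set (p := rep g).
  assert (Hex : exists c0 d0, p 0%nat 0%nat c0 d0 <> 0).
  { apply NNPP; intros N; apply Hg, xy_of_zw_zero; intros c d.
    apply NNPP; intros N'; apply N; exists c, d; exact N'. }
  destruct Hex as [c0 [d0 Hcd]].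
  destruct (Roots.roots_finite (c0 + d0) (fun c => p 0%nat 0%nat c (c0 + d0 - c)%nat)) as [L HL].
  { exists c0; split; [lia|]; replace (c0 + d0 - c0)%nat with d0 by lia; exact Hcd. }
  exists (map Ropp L); intros u _ Hu.
  apply in_map_iff; exists (- u); split; [ring|].
  apply HL, (line_coef_J u g (c0 + d0) Hu).
Qed.

Lemma lift_list (Rs : T -> Prop) (l : list T) : Forall Rs l ->
  exists l' : list {t : T | Rs t}, map (@proj1_sig _ _) l' = l.
Proof.
  induction 1 as [|x l Hx _ [l' E]]; [exists nil; reflexivity|].
  exists (exist _ x Hx :: l'); simpl; rewrite E; reflexivity.
Qed.

Theorem mainTheorem15 (Rs : T -> Prop) (omega h : T) :
  N_subring Rs ->
  transc_mod [Tx; Ty] Rs (Tadd omega (Tmul Tz h)) ->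
  exists Psi : R -> Prop,
    (exists f : {u : R | Psi u} -> {t : T | Rs t}, forall a b, f a = f b -> a = b) /\
    forall u : R, ~ Psi u ->
      transc_mod [Tx; Ty; Tadd Tz (Tmul (Tconst u) Tw)] Rs (Tadd omega (Tmul Tz h)).
Proof.
  intros [Hsub _] Htr; set (v := Tadd omega (Tmul Tz h)) in *.
  set (bad := fun (l : list {t : T | Rs t}) (u : R) =>
    ~ in_ideal [Tx; Ty] (peval (map (@proj1_sig _ _) l) v) /\
    in_ideal (Jgens u) (peval (map (@proj1_sig _ _) l) v)).
  exists (fun u => exists l, bad l u); split.
  - destruct (nat_in_subring Rs Hsub) as [i Hi].
    apply (Card.attached_inj Hi); intros l.
    destruct (finite_J_params (peval (map (@proj1_sig _ _) l) v)) as [L HL].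
    exists L; intros u [H1 H2]; exact (HL u H1 H2).
  - intros u Hu rs Hrs Hin.
    destruct (classic (in_ideal [Tx; Ty] (peval rs v))) as [Hxy|Hxy].
    + exact (Forall_impl _ (xy_sub_J u) (Htr rs Hrs Hxy)).
    + destruct (lift_list Rs rs Hrs) as [l <-]; exfalso; apply Hu; exists l; split; assumption.
Qed.
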